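(* Let $(Z,d)$ be an infinite compact metric space and $\Gamma$ an essential approximation graph for $Z$. Then $\mathcal I_\Gamma$ is a dense $G_\delta$-subset of $\mathcal P_\Gamma$.
   Context: A refining sequence is a sequence $(\mathcal V_n)_{n\ge0}$ of finite covers of $Z$, all open or all closed with nonempty interiors, with $\mathcal V_0=\{Z\}$, each element of $\mathcal V_{n+1}$ contained in some element of $\mathcal V_n$, and $\max_{v\in\mathcal V_n}\operatorname{diam}v\to0$. Its approximation graph $\Gamma$ has vertices $\coprod_n\mathcal V_n$ and an edge from $v_n\in\mathcal V_n$ to $v_{n+1}\in\mathcal V_{n+1}$ whenever $v_{n+1}\subset v_n$. The infinite path space $\mathcal P_\Gamma$ is the set of sequences of edges $(p_n)_{n\ge0}$, $p_n$ from some $v_n\in\mathcal V_n$ to some $v_{n+1}\in\mathcal V_{n+1}$, consecutive edges sharing their common vertex, with the compact topology generated by cylinder sets (paths with prescribed first finitely many edges). With $r(p_n)=v_{n+1}$, $\pi_\Gamma(\tilde p)$ is the unique point of $\bigcap_n\operatorname{cl}(r(p_n))$. $\mathcal I_\Gamma=\{\tilde p\in\mathcal P_\Gamma:\#\pi_\Gamma^{-1}(\pi_\Gamma(\tilde p))=1\}$. Overlapping set $\mathcal Y_n=\{\operatorname{cl}(v)\cap\operatorname{cl}(w):v\ne w\in\mathcal V_n\}$; $v^{\mathrm{ess}}=\operatorname{int}(v)\setminus\bigcup\mathcal Y_n$, $\mathcal V_n^{\mathrm{ess}}=\{v^{\mathrm{ess}}:v\in\mathcal V_n\}$. $\Gamma$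 is regular if for every $n\in\mathbb N$ and $v\in\mathcal V_n$: $v=\bigcup\{w\in\mathcal V_{n+1}:w\subset v\}$ and $v^{\mathrm{ess}}\ne\varnothing$. $\Gamma$ is essential if it is regular, consists of closed covers, and $\bigcup\mathcal V_n^{\mathrm{ess}}$ is dense in $Z$ for every $n\in\mathbb N$. *)

From HB Require Import structures.
From mathcomp Require Import all_boot all_order all_algebra.
From mathcomp Require Import all_classical all_reals all_analysis.
Set Implicit Arguments. Unset Strict Implicit. Unset Printing Implicit Defensive.
Import Order.TTheory GRing.Theory Num.Theory.
Import numFieldNormedType.Exports.
Local Open Scope classical_set_scope.
Local Open Scope ring_scope.

Section ApproxGraph.
Context {R : realType} {Z : metricType R}.

(* diameter of a subset of Z (extended real valued; -oo for the empty set) *)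
Definition diam (v : set Z) : \bar R :=
  ereal_sup [set (mdist xy.1 xy.2)%:E | xy in v `*` v].

Definition refining_closed (V : nat -> set (set Z)) : Prop :=
  [/\ (forall n, finite_set (V n)),
      (forall n, \bigcup_(v in V n) v = [set: Z]),
      (forall n v, V n v -> closed v /\ interior v !=set0),
      V 0%N = [set [set: Z]] &
      ((forall n w, V n.+1 w -> exists2 v, V n v & w `<=` v) /\
       ((fun n => ereal_sup [set diam v | v in V n]) @ \oo --> 0%E))].

Definition overlap (V : nat -> set (set Z)) (n : nat) : set (set Z) :=
  [set y | exists v w, [/\ V n v, V n w, v <> w & y = closure v `&` closure w]].

Definition ess (V : nat -> set (set Z)) (n : nat) (v : set Z) : set Z :=
  interior v `\` \bigcup_(y in overlap V n) y.

Definition Vess (V : nat -> set (set Z)) (n : nat) : set (set Z) :=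
  [set ess V n v | v in V n].

Definition regular (V : nat -> set (set Z)) : Prop :=
  forall n v, V n v ->
    v = \bigcup_(w in [set w | V n.+1 w /\ w `<=` v]) w /\ ess V n v !=set0.

(* essential approximation graph (closed covers are built into refining_closed) *)
Definition essential (V : nat -> set (set Z)) : Prop :=
  [/\ refining_closed V, regular V &
      forall n, dense (\bigcup_(e in Vess V n) e)].

(* infinite paths in the approximation graph, encoded by their vertex
   sequence v_0 = Z, v_1, v_2, ... (edges are determined by their endpoints) *)
Definition Ppath (V : nat -> set (set Z)) : set (nat -> set Z) :=
  [set p | forall n, V n (p n) /\ p n.+1 `<=` p n].

(* open sets of the path space: unions of cylinder sets *)
Definition Popen (V : nat -> set (set Z)) (U : set (nat -> set Z)) : Prop :=
  U `<=` Ppath V /\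
  forall p, U p -> exists N : nat, forall q, Ppath V q ->
    (forall n, (n <= N)%N -> q n = p n) -> U q.

Definition Pdense (V : nat -> set (set Z)) (S : set (nat -> set Z)) : Prop :=
  forall O, O !=set0 -> Popen V O -> O `&` S !=set0.

Definition PGdelta (V : nat -> set (set Z)) (S : set (nat -> set Z)) : Prop :=
  exists2 F : nat -> set (nat -> set Z),
    (forall i, Popen V (F i)) & S = \bigcap_i F i.

(* the set \bigcap_n cl(r(p_n)), which is the singleton {pi_Gamma(p)} *)
Definition pi_set (p : nat -> set Z) : set Z := \bigcap_n closure (p n.+1).

Definition IG (V : nat -> set (set Z)) : set (nat -> set Z) :=
  [set p | Ppath V p /\
     [set q | Ppath V q /\ pi_set q = pi_set p] = [set p]].

End ApproxGraph.

From HB Require Import structures.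
From mathcomp Require Import all_boot all_order all_algebra.
From mathcomp Require Import all_classical all_reals all_analysis.
Set Implicit Arguments. Unset Strict Implicit. Unset Printing Implicit Defensive.
Import Order.TTheory.
Local Open Scope classical_set_scope.
Local Open Scope ring_scope.

(* A path p lies in I_Gamma exactly when, writing y for its point, p_n is the
   only vertex of V_n containing y at every level n: regularity extends any
   vertex containing y to a path through y, and since the mesh tends to 0 two
   paths through y have the same point.  The covers being finite and closed,
   this makes I_Gamma the intersection over n of the open sets of paths one of
   whose vertices misses every vertex of V_n other than p_n.  For density,
   given a cylinder ending at p_N, the density of the essential parts yields a
   vertex inside int(p_N) whose points each lie in a single vertex of V_0,
   inside its interior one whose points each lie in a single vertex of V_1,
   and so on; by compactness these nested vertices share a point, and any
   path through it lies both in the cylinder and in I_Gamma. *)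

Lemma dependent_choice_from (T : Type) (P : nat -> T -> Prop)
    (S : nat -> T -> T -> Prop) (n : nat) (x : T) :
  (forall m u, P m u -> exists v, P m.+1 v /\ S m u v) -> P n x ->
  exists f : nat -> T,
    f n = x /\ forall m, (n <= m)%N -> P m (f m) /\ S m (f m) (f m.+1).
Proof.
move=> step Px.
have /choice[g Hg] : forall mu : nat * T,
    exists v, P mu.1 mu.2 -> P mu.1.+1 v /\ S mu.1 mu.2 v.
  move=> [m u]; have [/step [v Hv]|] := pselect (P m u); first by exists v.
  by exists u.
pose h := fix h k := if k is k'.+1 then g ((n + k')%N, h k') else x.
have Ph k : P (n + k)%N (h k).
  by elim: k => [|k IH]; [rewrite addn0 | rewrite addnS; exact: (Hg (_, _) IH).1].
exists (fun m => h (m - n)%N); split => [|m nm]; first by rewrite subnn.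
have [k ->] : exists k, m = (n + k)%N by exists (m - n)%N; rewrite subnKC.
by rewrite -addnS !addKn; split; [exact: Ph | exact: (Hg (_, _) (Ph k)).2].
Qed.

Lemma compact_nested_closed_meet (T : topologicalType) (W : nat -> set T) :
  compact [set: T] -> (forall n, closed (W n)) -> (forall n, W n !=set0) ->
  (forall n, W n.+1 `<=` W n) -> exists y, forall n, W n y.
Proof.
move=> cT cW nW dW.
have mono m n : (m <= n)%N -> W n `<=` W m.
  move=> mn; apply/subsetPset.
  by apply: (@nonincreasing_seqP _ (set T) W).1 mn => k; apply/subsetPset.
have FF : ProperFilter (filter_from setT W).
  apply: filter_from_proper => [|i _]; last exact: nW.
  apply: filter_fromT_filter; first by exists 0%N.
  by move=> i j; exists (maxn i j) => z Wz; split; apply: (mono _ _ _ _ Wz);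
    rewrite ?leq_maxl ?leq_maxr.
have [y [_ cly]] := cT _ FF filterT.
exists y => n; rewrite ((closure_id (W n)).1 (cW n)) => B nB.
by apply: cly nB; exists n.
Qed.

Section ApproximationGraph.
Context {R : realType} {Z : metricType R} (V : nat -> set (set Z)).

Definition uniquely_covered (n : nat) (y : Z) : Prop :=
  forall v w, V n v -> V n w -> v y -> w y -> v = w.

Definition rivals (n : nat) (u : set Z) : set Z :=
  \bigcup_(v in [set v | V n v /\ v <> u]) v.

Definition isolated_at (n : nat) : set (nat -> set Z) :=
  [set p | Ppath V p /\ exists K, p K `&` rivals n (p n) = set0].

Lemma notin_rivals_uniquely_covered n u y :
  ~ rivals n u y -> uniquely_covered n y.
Proof.
move=> yNr; have eq_u v : V n v -> v y -> v = u.
  by move=> Vv vy; apply: contra_notP yNr => vNu; exists v.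
by move=> v w Vv Vw vy wy; rewrite (eq_u v) // (eq_u w).
Qed.

Lemma ess_rivals n u x : V n u -> ess V n u x -> ~ rivals n u x.
Proof.
move=> Vu [xu xNY] [v [Vv vNu] vx]; apply: xNY.
exists (closure v `&` closure u); first by exists v, u.
by split; apply: subset_closure => //; apply: interior_subset.
Qed.

Lemma isolated_at_open n : Popen V (isolated_at n).
Proof.
split=> [p [] //|p [_ [K pK]]].
exists (maxn K n) => q Pq qp; split=> //; exists K.
by rewrite !qp ?leq_maxl ?leq_maxr.
Qed.

Section Refining.
Hypothesis rcV : refining_closed V.

Lemma closed_vertex n v : V n v -> closed v.
Proof. by case: rcV => _ _ h _ _ /h[]. Qed.

Lemma vertex_interior n v : V n v -> interior v !=set0.
Proof. by case: rcV => _ _ h _ _ /h[]. Qed.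

Lemma vertex_neq0 n v : V n v -> v !=set0.
Proof. by move=> /vertex_interior[x /interior_subset]; exists x. Qed.

Lemma vertex_cover n x : exists2 w, V n w & w x.
Proof.
case: rcV => _ cov _ _ _.
have [w Vw wx] : (\bigcup_(v in V n) v) x by rewrite cov.
by exists w.
Qed.

Lemma level0E : V 0%N = [set [set: Z]].
Proof. by case: rcV. Qed.

Lemma vertex_parent n w : V n.+1 w -> exists2 v, V n v & w `<=` v.
Proof. by case: rcV => _ _ _ _ [h _]; exact: h. Qed.

Lemma closed_rivals n u : closed (rivals n u).
Proof.
apply: closed_bigcup => [|v [Vv _]]; last exact: closed_vertex Vv.
case: rcV => finV _ _ _ _.
by apply: sub_finite_set (finV n) => v [].
Qed.

Lemma mesh_lt (r : R) : 0 < r ->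
  exists K, forall w a b, V K w -> w a -> w b -> mdist a b < r.
Proof.
case: rcV => _ _ _ _ [_ mesh0] r0.
have [|K _ HK] := mesh0 _ (open_ereal_lt' (_ : (0 < r%:E)%E)); first by rewrite lte_fin.
exists K => w a b Vw wa wb; rewrite -lte_fin.
apply: le_lt_trans (HK K (leqnn K)).
apply: (@le_trans _ _ (diam w)); apply: ereal_sup_ubound; first by exists (a, b).
by exists w.
Qed.

Lemma vertex_in_nbhs y O : nbhs y O ->
  exists K, forall w, V K w -> w y -> w `<=` O.
Proof.
move=> /nbhs_ballP[e /= e0 yeO]; have [K HK] := mesh_lt e0.
by exists K => w Vw wy z wz; apply: yeO; rewrite ballEmdist; exact: HK Vw wy wz.
Qed.

Lemma vertex_in_open O : open O -> O !=set0 -> exists K w, V K w /\ w `<=` O.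
Proof.
move=> oO [x Ox]; have [K HK] := vertex_in_nbhs (open_nbhs_nbhs (conj oO Ox)).
by have [w Vw wx] := vertex_cover K x; exists K, w; split; last exact: HK.
Qed.

Lemma Ppath_nonincreasing p : Ppath V p -> forall m n, (m <= n)%N -> p n `<=` p m.
Proof.
move=> Pp m n mn; apply/subsetPset.
apply: (@nonincreasing_seqP _ (set Z) p).1 mn => k.
by apply/subsetPset; case: (Pp k).
Qed.

Lemma pi_setP p y : Ppath V p -> pi_set p y <-> forall n, p n y.
Proof.
move=> Pp; split=> [piy [|n]|py n _]; last exact: subset_closure.
  by case: (Pp 0%N); rewrite level0E => ->.
by rewrite ((closure_id _).1 (closed_vertex (Pp n.+1).1)); exact: piy.
Qed.

Lemma pi_set_eq1 p y : Ppath V p -> pi_set p y -> pi_set p = [set y].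
Proof.
move=> Pp piy; apply/seteqP; split=> [z piz|_ -> //].
have [-> //|zNy] := eqVneq z y.
have := @mesh_lt (mdist y z); rewrite mdist_gt0 eq_sym zNy => /(_ isT)[K HK].
have := HK _ _ _ (Pp K).1 ((pi_setP y Pp).1 piy K) ((pi_setP z Pp).1 piz K).
by rewrite ltxx.
Qed.

Section Regular.
Hypothesis regV : regular V.

Lemma vertex_child n v x : V n v -> v x -> exists2 w, V n.+1 w & w `<=` v /\ w x.
Proof.
by move=> Vv; have [vE _] := regV Vv; rewrite {1}vE => -[w [Vw wv] wx]; exists w.
Qed.

Lemma path_through n w y : V n w -> w y ->
  exists2 q, Ppath V q & q n = w /\ forall m, q m y.
Proof.
have descend m u : V m u /\ u y -> exists v, (V m.+1 v /\ v y) /\ v `<=` u.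
  by move=> [Vu /(vertex_child Vu)[v Vv [vu vy]]]; exists v.
elim: n w => [|n IH] w Vw wy.
  have [d [d0 Hd]] := dependent_choice_from descend (conj Vw wy).
  exists d => [m|]; first by have [[]] := Hd m (leq0n m).
  by split=> // m; have [[]] := Hd m (leq0n m).
have [v Vv wv] := vertex_parent Vw.
have [q Pq [qn qy]] := IH v Vv (wv y wy).
have [d [dn Hd]] := dependent_choice_from descend (conj Vw wy).
exists (fun m => if (m <= n)%N then q m else d m).
  move=> m; case: (ltngtP m n) => [mn | nm | ->].
  - exact: Pq.
  - by have [[]] := Hd m nm.
  - by rewrite qn dn.
split=> [|m]; first by rewrite ltnn dn.
by case: leqP => nm; [exact: qy | have [[]] := Hd m nm].
Qed.

Lemma IGP p y : Ppath V p -> pi_set p y ->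
  IG V p <-> forall n w, V n w -> w y -> w = p n.
Proof.
move=> Pp piy; split=> [[_ fibre] n w Vw wy | uniq_p].
  have [q Pq [qn qy]] := path_through Vw wy.
  have : [set q | Ppath V q /\ pi_set q = pi_set p] q.
    split=> //.
    by rewrite (pi_set_eq1 Pq ((pi_setP y Pq).2 qy)) (pi_set_eq1 Pp piy).
  by rewrite fibre => /= qp; rewrite -qn qp.
split=> //; apply/seteqP; split=> [q [Pq piq] | _ -> //].
have qy : forall n, q n y by apply/(pi_setP y Pq); rewrite piq.
by apply/funext => n; exact: uniq_p (Pq n).1 (qy n).
Qed.

Section Compact.
Hypothesis cZ : compact [set: Z].

Lemma pi_set_neq0 p : Ppath V p -> pi_set p !=set0.
Proof.
move=> Pp; have [y py] := @compact_nested_closed_meet _ (fun n => p n.+1) cZ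
  (fun n => closed_vertex (Pp n.+1).1) (fun n => vertex_neq0 (Pp n.+1).1)
  (fun n => (Pp n.+1).2).
by exists y => n _; apply: subset_closure.
Qed.

Lemma IG_bigcap : IG V = \bigcap_n isolated_at n.
Proof.
apply/seteqP; split=> [p IGp n _ | p isop].
  have Pp := IGp.1; have [y piy] := pi_set_neq0 Pp.
  have yNr : ~ rivals n (p n) y.
    by move=> [w [Vw wNp] wy]; apply: wNp; exact: (IGP Pp piy).1 IGp n w Vw wy.
  have [K HK] := vertex_in_nbhs
    (open_nbhs_nbhs (conj (closed_openC (@closed_rivals n (p n))) yNr)).
  split=> //; exists K; apply/disjoints_subset.
  exact: HK (Pp K).1 ((pi_setP y Pp).1 piy K).
have Pp := (isop 0%N I).1; have [y piy] := pi_set_neq0 Pp.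
apply/(IGP Pp piy) => n w Vw wy; apply: contrapT => wNp.
have [_ [K pK]] := isop n I.
have : (p K `&` rivals n (p n)) y.
  by split; [exact: (pi_setP y Pp).1 piy K | exists w].
by rewrite pK.
Qed.

Hypothesis ess_dense : forall n, dense (\bigcup_(e in Vess V n) e).

Lemma vertex_uniquely_covered_in m O : open O -> O !=set0 ->
  exists K w, [/\ V K w, w `<=` O & w `<=` uniquely_covered m].
Proof.
move=> oO O0; have [x [Ox [_ [u Vu <-] xu]]] := ess_dense m O0 oO.
have oOr : open (O `&` ~` rivals m u).
  exact: openI oO (closed_openC (@closed_rivals m u)).
have [K [w [Vw wOr]]] := vertex_in_open oOr (ex_intro _ x (conj Ox (ess_rivals Vu xu))).
exists K, w; split=> // [z /wOr[] //|z /wOr[_]].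
exact: notin_rivals_uniquely_covered.
Qed.

Lemma dense_IG : Pdense V (IG V).
Proof.
move=> O [p Op] [OP Oopen]; have [N agreeN] := Oopen p Op; have Pp := OP p Op.
have shrink m u : (exists K, V K u) -> exists v,
    (exists K, V K v) /\ (v `<=` u /\ v `<=` uniquely_covered m).
  move=> [K Vu].
  have [K' [v [Vv vu vU]]] :=
    vertex_uniquely_covered_in m (@open_interior _ u) (vertex_interior Vu).
  by exists v; split; [exists K' | split=> // z /vu /interior_subset].
have [W [W0 HW]] := dependent_choice_from (n := 0%N) shrink (ex_intro _ N (Pp N).1).
have [y Wy] : exists y, forall m, W m y.
  apply: compact_nested_closed_meet cZ _ _ _ => m.
  - by have [[K VW] _] := HW m (leq0n m); exact: closed_vertex VW.
  - by have [[K VW] _] := HW m (leq0n m); exact: vertex_neq0 VW.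
  - by have [_ []] := HW m (leq0n m).
have Uy m : uniquely_covered m y by have [_ [_]] := HW m (leq0n m); apply; exact: Wy.
have V0T : V 0%N [set: Z] by rewrite level0E.
have [q Pq [_ qy]] := path_through V0T (I : [set: Z] y).
exists q; split.
  apply: agreeN => // n nN; apply: Uy (Pq n).1 (Pp n).1 (qy n) _.
  by apply: (Ppath_nonincreasing Pp nN); rewrite -W0; exact: Wy.
apply/(IGP Pq ((pi_setP y Pq).2 qy)) => n w Vw wy.
exact: Uy Vw (Pq n).1 wy (qy n).
Qed.

End Compact.
End Regular.
End Refining.
End ApproximationGraph.

Theorem proposition2p23 (R : realType) (Z : metricType R)
    (V : nat -> set (set Z)) :
  compact [set: Z] -> infinite_set [set: Z] -> essential V ->
  Pdense V (IG V) /\ PGdelta V (IG V).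
Proof.
move=> cZ _ [rcV regV denseV]; split; first exact: dense_IG.
by exists (isolated_at V); [exact: isolated_at_open | exact: IG_bigcap].
Qed.
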